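(* For every integer $q\ge2$ there exists a constant $c_6>0$ depending only on $q$ such that for every positive integer $k$ there exists a positive integer $n\le \exp(c_6k)$ with $s_q(kn)=k$. Consequently, for every $k\ge1$ the number $a_k$ (in base $q$) exists and $a_k=\exp(O_q(k))$.
   Context: For an integer base $q\ge2$, $s_q(m)$ denotes the sum of the base-$q$ digits of the nonnegative integer $m$, and $a_k$ denotes the smallest positive multiple of $k$ with $s_q(a_k)=k$. *)

From Stdlib Require Import Reals Arith Lia.

(* Base-q digit sum, computed with fuel; fuel m suffices since m / q < m
   for q >= 2 and m > 0. *)
Fixpoint digsum_aux (fuel q m : nat) : nat :=
  match fuel with
  | O => O
  | S f => if Nat.eqb m 0 then O else Nat.modulo m q + digsum_aux f q (Nat.div m q)
  end.

Definition s_q (q m : nat) : nat := digsum_aux m q m.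

Definition is_a_k (q k a : nat) : Prop :=
  0 < a /\ Nat.divide k a /\ s_q q a = k /\
  (forall b, 0 < b -> Nat.divide k b -> s_q q b = k -> a <= b).

From Stdlib Require Import Reals Arith Lia Lra List Wf_nat Classical.

(* Writing k = s_q(k) + (q-1) M (digit sums are congruent mod q-1), two
   constructions cover all k:
   - if k <= q^M, the multiple k * (1 + q^k (q^M - 1)) concatenates the digits
     of k with those of k (q^M - 1), and the latter has digit sum M (q-1)
     because k - 1 and q^M - k are digit-wise complements of q^M - 1;
   - otherwise k < 3q, and a pigeonhole argument on q^i mod k gives
     q^(a+t) = q^a (mod k); then q^a (1 + q^t + ... + q^((k-1)t)) is a
     multiple of k with exactly k digits equal to 1, of size q^(k + k^2).
   Since k + k^2 <= (3q+2) k when k < 3q, both give n <= q^((3q+2)k), i.e.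
   n <= exp(c k) with c = (3q+2) ln q.  The least such multiple a_k is then
   at most k n <= q^((3q+3)k). *)

Section DigitSum.

Variable q : nat.
Hypothesis hq : 2 <= q.

Lemma digsum_aux_fuel f1 f2 m :
  m <= f1 -> m <= f2 -> digsum_aux f1 q m = digsum_aux f2 q m.
Proof.
  revert f2 m; induction f1 as [|f1 IH]; intros f2 m h1 h2.
  - replace m with 0 by lia. destruct f2; reflexivity.
  - destruct f2 as [|f2]; [replace m with 0 by lia; reflexivity|].
    simpl. destruct (Nat.eqb m 0) eqn:E; [reflexivity|].
    apply Nat.eqb_neq in E.
    assert (m / q < m) by (apply Nat.div_lt; lia).
    f_equal. apply IH; lia.
Qed.

Lemma s_q_zero : s_q q 0 = 0.
Proof. reflexivity. Qed.

Lemma s_q_step m : s_q q m = m mod q + s_q q (m / q).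
Proof.
  unfold s_q. destruct m as [|m]; [rewrite Nat.Div0.mod_0_l, Nat.Div0.div_0_l; reflexivity|].
  cbn [digsum_aux Nat.eqb]. f_equal.
  assert (S m / q < S m) by (apply Nat.div_lt; lia).
  apply digsum_aux_fuel; lia.
Qed.

Lemma s_q_digit d x : d < q -> s_q q (d + q * x) = d + s_q q x.
Proof.
  intros hd. rewrite s_q_step, (Nat.mul_comm q x), Nat.Div0.mod_add, Nat.mod_small by lia.
  rewrite Nat.div_add, Nat.div_small by lia. reflexivity.
Qed.

(* m exceeds its digit sum by at least (q-1)(m/q): m = m mod q + q (m/q) while
   s_q m = m mod q + s_q (m/q) with s_q (m/q) <= m/q. *)
Lemma s_q_le_quot m : s_q q m + (q - 1) * (m / q) <= m.
Proof.
  induction m as [m IH] using lt_wf_ind.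
  destruct (Nat.eq_dec m 0) as [->|E]; [rewrite s_q_zero, Nat.Div0.div_0_l; lia|].
  assert (m / q < m) by (apply Nat.div_lt; lia).
  specialize (IH _ H). rewrite s_q_step.
  pose proof (Nat.div_mod_eq m q). nia.
Qed.

Lemma s_q_congr m : exists M, m = s_q q m + (q - 1) * M.
Proof.
  induction m as [m IH] using lt_wf_ind.
  destruct (Nat.eq_dec m 0) as [->|E]; [exists 0; rewrite s_q_zero; lia|].
  assert (m / q < m) by (apply Nat.div_lt; lia).
  destruct (IH _ H) as [M HM]. exists (M + m / q).
  rewrite s_q_step. pose proof (Nat.div_mod_eq m q). nia.
Qed.

Lemma s_q_concat j A B : B < q ^ j -> s_q q (B + q ^ j * A) = s_q q B + s_q q A.
Proof.
  revert A B; induction j as [|j IH]; intros A B hB.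
  - simpl in hB. replace B with 0 by lia. simpl. rewrite Nat.add_0_r. reflexivity.
  - pose proof (Nat.div_mod_eq B q).
    assert (Hm : B mod q < q) by (apply Nat.mod_upper_bound; lia).
    assert (Hd : B / q < q ^ j) by (apply Nat.Div0.div_lt_upper_bound; simpl in hB; lia).
    replace (B + q ^ S j * A) with (B mod q + q * (B / q + q ^ j * A)) by (simpl; nia).
    rewrite s_q_digit, IH by assumption.
    rewrite (s_q_step B). lia.
Qed.

Lemma s_q_shift a X : s_q q (q ^ a * X) = s_q q X.
Proof.
  pose proof (s_q_concat a X 0) as H. simpl in H. apply H.
  pose proof (Nat.pow_le_mono_l 1 q a). rewrite Nat.pow_1_l in H0. lia.
Qed.

(* y and q^L - 1 - y are digit-wise complements: all L digits add up to q-1. *)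
Lemma s_q_complement L y : y < q ^ L -> s_q q (q ^ L - 1 - y) + s_q q y = L * (q - 1).
Proof.
  revert y; induction L as [|L IH]; intros y hy.
  - simpl in hy. replace y with 0 by lia. reflexivity.
  - pose proof (Nat.div_mod_eq y q).
    assert (Hm : y mod q < q) by (apply Nat.mod_upper_bound; lia).
    assert (Hd : y / q < q ^ L) by (apply Nat.Div0.div_lt_upper_bound; simpl in hy; lia).
    specialize (IH _ Hd).
    replace (q ^ S L - 1 - y) with ((q - 1 - y mod q) + q * (q ^ L - 1 - y / q))
      by (simpl; nia).
    rewrite s_q_digit by lia.
    rewrite (s_q_step y). nia.
Qed.

(* m (q^L - 1) = q^L (m-1) + (q^L - 1 - (m-1)) has digit sum L (q-1). *)
Lemma s_q_mul_pred_pow L m : 1 <= m <= q ^ L -> s_q q (m * (q ^ L - 1)) = L * (q - 1).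
Proof.
  intros hm.
  replace (m * (q ^ L - 1)) with ((q ^ L - 1 - (m - 1)) + q ^ L * (m - 1)) by nia.
  rewrite s_q_concat by lia. apply s_q_complement. lia.
Qed.

End DigitSum.

Lemma multiple_when_pow_large q k M : 2 <= q -> 1 <= k ->
  k = s_q q k + (q - 1) * M -> k <= q ^ M ->
  exists n, 1 <= n <= q ^ (k + M) /\ s_q q (k * n) = k.
Proof.
  intros hq hk HM Hbig. exists (1 + q ^ k * (q ^ M - 1)).
  pose proof (Nat.pow_gt_lin_r q k ltac:(lia)).
  pose proof (Nat.pow_le_mono_l 1 q M ltac:(lia)). rewrite Nat.pow_1_l in H0.
  split; [rewrite Nat.pow_add_r; nia|].
  replace (k * (1 + q ^ k * (q ^ M - 1))) with (k + q ^ k * (k * (q ^ M - 1))) by ring.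
  rewrite s_q_concat, s_q_mul_pred_pow by lia. lia.
Qed.

Lemma pow_ge_linear q x : 2 <= q -> 3 <= x -> q * (x + 1) <= q ^ x.
Proof.
  intros hq hx. induction x as [|x IH]; [lia|].
  destruct (Nat.eq_dec x 2) as [->|E]; [simpl; nia|].
  rewrite Nat.pow_succ_r'. specialize (IH ltac:(lia)). nia.
Qed.

(* The first construction fails only for k < 3q: M >= k / q, and
   q^(k/q) >= q (k/q + 1) > k as soon as k / q >= 3. *)
Lemma small_when_pow_short q k M : 2 <= q ->
  k = s_q q k + (q - 1) * M -> q ^ M < k -> k < 3 * q.
Proof.
  intros hq HM Hsmall.
  pose proof (s_q_le_quot q hq k).
  assert (Hx : k / q <= M) by nia.
  pose proof (Nat.pow_le_mono_r q _ _ ltac:(lia) Hx).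
  pose proof (Nat.div_mod_eq k q). pose proof (Nat.mod_upper_bound k q ltac:(lia)).
  destruct (le_lt_dec 3 (k / q)) as [h3|h3]; [|nia].
  pose proof (pow_ge_linear q (k / q) hq h3). nia.
Qed.

(* Pigeonhole on the k + 1 residues q^0, ..., q^k modulo k. *)
Lemma pow_mod_repeat q k : 1 <= k ->
  exists a t, 1 <= t /\ a + t <= k /\ q ^ (a + t) mod k = q ^ a mod k.
Proof.
  intros hk. apply NNPP. intros Hno.
  set (f := fun i => q ^ i mod k).
  assert (Hinj : NoDup (map f (seq 0 (S k)))).
  { apply NoDup_map_NoDup_ForallPairs; [|apply seq_NoDup].
    intros x y Hx Hy Hf. apply in_seq in Hx, Hy. unfold f in Hf.
    destruct (lt_eq_lt_dec x y) as [[l|e]|l]; auto; exfalso; apply Hno.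
    - exists x, (y - x). replace (x + (y - x)) with y by lia. repeat split; auto; lia.
    - exists y, (x - y). replace (y + (x - y)) with x by lia. repeat split; auto; lia. }
  assert (Hrange : incl (map f (seq 0 (S k))) (seq 0 k)).
  { intros z Hz. apply in_map_iff in Hz as [i [<- _]]. apply in_seq. unfold f.
    pose proof (Nat.mod_upper_bound (q ^ i) k). lia. }
  pose proof (NoDup_incl_length Hinj Hrange). rewrite length_map, !length_seq in H. lia.
Qed.

Fixpoint spaced_ones (q t i : nat) : nat :=
  match i with O => O | S i => 1 + q ^ t * spaced_ones q t i end.

Lemma s_q_spaced_ones q t i : 2 <= q -> 1 <= t -> s_q q (spaced_ones q t i) = i.
Proof.
  intros hq ht. induction i as [|i IH]; [reflexivity|].
  pose proof (Nat.pow_gt_lin_r q t ltac:(lia)).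
  cbn [spaced_ones]. rewrite s_q_concat, IH by lia.
  rewrite (s_q_step q hq 1), Nat.mod_small, Nat.div_small by lia. reflexivity.
Qed.

Lemma spaced_ones_lt q t i : 2 <= q -> 1 <= t -> spaced_ones q t i < q ^ (t * i).
Proof.
  intros hq ht. induction i as [|i IH]; [rewrite Nat.mul_0_r; simpl; lia|].
  pose proof (Nat.pow_gt_lin_r q t ltac:(lia)).
  cbn [spaced_ones]. rewrite Nat.mul_succ_r, Nat.pow_add_r. nia.
Qed.

(* If q^(a+t) = q^a mod k, every summand of q^a * spaced_ones is q^a mod k. *)
Lemma spaced_ones_mod q t a k i : q ^ (a + t) mod k = q ^ a mod k ->
  q ^ a * spaced_ones q t i mod k = i * q ^ a mod k.
Proof.
  intros hp. induction i as [|i IH]; [simpl; rewrite Nat.mul_0_r; reflexivity|].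
  cbn [spaced_ones].
  replace (q ^ a * (1 + q ^ t * spaced_ones q t i))
    with (q ^ a + q ^ (a + t) * spaced_ones q t i) by (rewrite Nat.pow_add_r; ring).
  replace (S i * q ^ a) with (q ^ a + i * q ^ a) by ring.
  rewrite Nat.Div0.add_mod, <- Nat.Div0.mul_mod_idemp_l, hp,
    Nat.Div0.mul_mod_idemp_l, IH, <- Nat.Div0.add_mod.
  reflexivity.
Qed.

Lemma multiple_by_pigeonhole q k : 2 <= q -> 1 <= k ->
  exists n, 1 <= n <= q ^ (k + k * k) /\ s_q q (k * n) = k.
Proof.
  intros hq hk.
  destruct (pow_mod_repeat q k hk) as [a [t [ht [hat hp]]]].
  set (N := q ^ a * spaced_ones q t k).
  assert (HsN : s_q q N = k) by (unfold N; rewrite s_q_shift, s_q_spaced_ones; lia).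
  assert (Hdiv : N mod k = 0).
  { unfold N. rewrite spaced_ones_mod, Nat.mul_comm by exact hp. apply Nat.Div0.mod_mul. }
  apply Nat.Lcm0.mod_divide in Hdiv as [n Hn].
  assert (HN : q ^ a * spaced_ones q t k <= q ^ k * q ^ (k * k)).
  { apply Nat.mul_le_mono; [apply Nat.pow_le_mono_r; lia|].
    apply Nat.lt_le_incl, Nat.lt_le_trans with (q ^ (t * k)); [apply spaced_ones_lt; lia|].
    apply Nat.pow_le_mono_r; nia. }
  fold N in HN. assert (HkN : k * n = N) by lia.
  exists n. rewrite Nat.pow_add_r, HkN. split; [|exact HsN]. split.
  - destruct n; [|lia]. rewrite Nat.mul_0_r in HkN.
    rewrite <- HkN, s_q_zero in HsN. lia.
  - nia.
Qed.

Lemma multiple_with_digit_sum q k : 2 <= q -> 1 <= k ->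
  exists n, 1 <= n <= q ^ ((3 * q + 2) * k) /\ s_q q (k * n) = k.
Proof.
  intros hq hk.
  destruct (s_q_congr q hq k) as [M HM].
  assert (HMk : M <= k) by nia.
  destruct (le_lt_dec k (q ^ M)) as [Hbig|Hsmall].
  - destruct (multiple_when_pow_large q k M hq hk HM Hbig) as [n [Hn Hs]].
    exists n. split; [|exact Hs].
    split; [lia|]. eapply Nat.le_trans; [apply Hn|]. apply Nat.pow_le_mono_r; lia.
  - pose proof (small_when_pow_short q k M hq HM Hsmall).
    destruct (multiple_by_pigeonhole q k hq hk) as [n [Hn Hs]].
    exists n. split; [|exact Hs].
    split; [lia|]. eapply Nat.le_trans; [apply Hn|]. apply Nat.pow_le_mono_r; nia.
Qed.

Lemma a_k_exists_below q k n : 1 <= k -> 1 <= n -> s_q q (k * n) = k ->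
  exists a, is_a_k q k a /\ a <= k * n.
Proof.
  intros hk hn hs.
  set (P := fun b => 0 < b /\ Nat.divide k b /\ s_q q b = k).
  assert (HP : P (k * n)) by (repeat split; [nia|exists n; ring|exact hs]).
  destruct (dec_inh_nat_subset_has_unique_least_element P (fun b => classic (P b))
              (ex_intro _ _ HP)) as [a [[Ha Hleast] _]].
  exists a. split; [|exact (Hleast _ HP)].
  destruct Ha as [Ha1 [Ha2 Ha3]]. repeat split; auto.
  intros b hb1 hb2 hb3. apply Hleast. repeat split; assumption.
Qed.

Lemma pow_bound_as_exp q c k n : 2 <= q -> n <= q ^ (c * k) ->
  (INR n <= exp (INR c * ln (INR q) * INR k))%R.
Proof.
  intros hq hn.
  apply Rle_trans with (INR (q ^ (c * k))); [apply le_INR; exact hn|].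
  rewrite pow_INR, <- Rpower_pow by (apply lt_0_INR; lia).
  unfold Rpower. rewrite mult_INR. right. f_equal. ring.
Qed.

Lemma ln_nat_pos q : 2 <= q -> (0 < ln (INR q))%R.
Proof.
  intros hq. rewrite <- ln_1. apply ln_increasing; [lra|].
  apply (lt_INR 1). lia.
Qed.

Theorem mainTheorem14 (q : nat) (hq : 2 <= q) :
  (exists c6 : R, (0 < c6)%R /\
     forall k : nat, 1 <= k ->
       exists n : nat, 1 <= n /\ (INR n <= exp (c6 * INR k))%R /\ s_q q (k * n) = k)
  /\
  (exists C : R, (0 < C)%R /\
     forall k : nat, 1 <= k ->
       exists a : nat, is_a_k q k a /\ (INR a <= exp (C * INR k))%R).
Proof.
  pose proof (ln_nat_pos q hq) as Hln.
  split.
  - exists (INR (3 * q + 2) * ln (INR q))%R.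
    split; [apply Rmult_lt_0_compat; [apply lt_0_INR; lia|exact Hln]|].
    intros k hk. destruct (multiple_with_digit_sum q k hq hk) as [n [Hn Hs]].
    exists n. repeat split; [lia| |exact Hs].
    apply pow_bound_as_exp; [exact hq|apply Hn].
  - exists (INR (3 * q + 3) * ln (INR q))%R.
    split; [apply Rmult_lt_0_compat; [apply lt_0_INR; lia|exact Hln]|].
    intros k hk. destruct (multiple_with_digit_sum q k hq hk) as [n [Hn Hs]].
    destruct (a_k_exists_below q k n hk (proj1 Hn) Hs) as [a [Ha Hle]].
    exists a. split; [exact Ha|]. apply pow_bound_as_exp; [exact hq|].
    (* a <= k n <= q^k q^((3q+2)k) *)
    pose proof (Nat.pow_gt_lin_r q k ltac:(lia)).
    replace ((3 * q + 3) * k) with (k + (3 * q + 2) * k) by ring.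
    rewrite Nat.pow_add_r. nia.
Qed.
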